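(* Let $G$ be a graph having a perfect 2-matching. Then there is a graph $G'$ on the same vertex set with $d_{G'}(v)=d_G(v)$ for every vertex $v$, such that $G'$ has a perfect 2-matching with at most one odd cycle.
   Context: All graphs are finite and simple. A perfect 2-matching of a graph is a spanning subgraph each of whose connected components is either a $K_2$ (a single edge) or an odd cycle. *)

From mathcomp Require Import all_boot.
Set Implicit Arguments. Unset Strict Implicit. Unset Printing Implicit Defensive.

Definition simple_graph (T : finType) (e : rel T) : Prop :=
  symmetric e /\ irreflexive e.

Definition deg (T : finType) (e : rel T) (v : T) : nat := #|[set u | e v u]|.

Definition spanning_subgraph (T : finType) (e F : rel T) : Prop :=
  symmetric F /\ (forall x y, F x y -> e x y).

Definition component (T : finType) (F : rel T) (x : T) : {set T} :=
  [set y | connect F x y].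

Definition components (T : finType) (F : rel T) : {set {set T}} :=
  [set component F x | x : T].

Definition is_K2 (T : finType) (F : rel T) (C : {set T}) : Prop :=
  exists x y, [/\ x != y, C = [set x; y] & F x y].

Definition is_odd_cycle (T : finType) (F : rel T) (C : {set T}) : Prop :=
  exists s : seq T,
    [/\ uniq s, 3 <= size s, odd (size s), C = [set x in s] &
        forall x y, x \in C -> y \in C ->
          F x y = (y == next s x) || (x == next s y)].

Definition perfect_2matching (T : finType) (e F : rel T) : Prop :=
  spanning_subgraph e F /\
  forall C, C \in components F -> is_K2 F C \/ is_odd_cycle F C.

Definition at_most_one_odd_cycle (T : finType) (F : rel T) : Prop :=
  forall C1 C2, C1 \in components F -> C2 \in components F ->
    is_odd_cycle F C1 -> is_odd_cycle F C2 -> C1 = C2.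

From mathcomp Require Import all_boot.
From Stdlib Require Import Classical.
Set Implicit Arguments. Unset Strict Implicit. Unset Printing Implicit Defensive.

(** Induction on the number of vertices lying on odd cycles of the perfect
  2-matching F.  Take two odd cycles C1, C2 of F, vertices a in C1, c in C2
  and their cycle successors b, d.  Deleting a from C1 (c from C2) leaves a
  path with an even number of vertices, which F pairs off; if ac is an edge,
  these pairs together with ac form a perfect matching of C1 u C2 that
  replaces the two cycles (similarly if bd is an edge).  Otherwise the
  2-switch trading the edges ab, cd for ac, bd keeps the graph simple and
  every degree unchanged, and the switched graph contains ac and every edge
  of F avoiding a and c. *)

Section Pairing.
Variable T : eqType.
Implicit Types (E : rel T) (s : seq T) (x : T).

Fixpoint paired E s : bool :=
  if s is x :: y :: s' then E x y && paired E s' else nilp s.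

Fixpoint partner s x : T :=
  if s is y :: z :: s' then
    if x == y then z else if x == z then y else partner s' x
  else x.

Lemma pair_ind (P : seq T -> Prop) :
  P [::] -> (forall x, P [:: x]) -> (forall x y s, P s -> P [:: x, y & s]) ->
  forall s, P s.
Proof.
move=> P0 P1 P2 s; have [n] := ubnP (size s).
elim: n s => // n IH [|x [|y s]] //= lt_s.
by apply/P2/IH; rewrite -ltnS ltnW.
Qed.

Lemma paired_even E s : paired E s -> ~~ odd (size s).
Proof. by elim/pair_ind: s => [|x|x y s IH] //= /andP [_ /IH]; rewrite negbK. Qed.

Lemma paired_cat E s1 s2 : paired E s1 -> paired E s2 -> paired E (s1 ++ s2).
Proof. by elim/pair_ind: s1 => [|x|x y s1 IH] //= /andP [-> /IH]. Qed.

Lemma sub_in_paired E E' s : {in s &, subrel E E'} -> paired E s -> paired E' s.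
Proof.
elim/pair_ind: s => [|x|x y s IH] //= sub /andP [Exy ps].
rewrite sub ?inE ?eqxx ?orbT //= IH //.
by apply: sub_in2 sub => u us; rewrite !inE us !orbT.
Qed.

Lemma path_paired E x s : path E x s -> ~~ odd (size s) -> paired E s.
Proof.
elim/pair_ind: s x => [|y|y z s IH] x //= /and3P [_ Eyz ps].
by rewrite negbK Eyz => /(IH _ ps).
Qed.

Lemma mem_partner s x : x \in s -> partner s x \in s.
Proof.
elim/pair_ind: s => [|y|y z s IH] //=.
case: (x =P y) => [_|nxy]; first by rewrite !inE eqxx orbT.
case: (x =P z) => [_|nxz]; first by rewrite !inE eqxx.
by rewrite !inE => /or3P [/eqP|/eqP|/IH ->] //; rewrite !orbT.
Qed.

Lemma partnerK s x : uniq s -> x \in s -> partner s (partner s x) = x.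
Proof.
elim/pair_ind: s => [|y|y z s IH] //=.
rewrite !inE negb_or => /and3P [/andP [yz ys] zs us].
case: (x =P y) => [->|nxy]; first by rewrite (eq_sym z) (negbTE yz) eqxx.
case: (x =P z) => [->|nxz]; first by rewrite eqxx.
move=> /or3P [/eqP|/eqP|xs] //.
rewrite ifN; last by apply: contraNneq ys => <-; apply: mem_partner.
by rewrite ifN ?IH //; apply: contraNneq zs => <-; apply: mem_partner.
Qed.

Lemma partner_neq s x : uniq s -> ~~ odd (size s) -> x \in s -> partner s x != x.
Proof.
elim/pair_ind: s => [|y|y z s IH] //=.
rewrite !inE negb_or negbK => /and3P [/andP [yz _] _ us] es.
case: (x =P y) => [->|nxy]; first by rewrite (eq_sym z).
case: (x =P z) => [-> //|nxz].
by move=> /or3P [/eqP|/eqP|/(IH us es)].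
Qed.

Lemma paired_partner E s x :
  symmetric E -> paired E s -> x \in s -> E x (partner s x).
Proof.
move=> symE; elim/pair_ind: s => [|y|y z s IH] //= /andP [Eyz ps].
case: (x =P y) => [-> //|nxy]; case: (x =P z) => [->|nxz]; first by rewrite symE.
by rewrite !inE => /or3P [/eqP|/eqP|/(IH ps)].
Qed.

End Pairing.

Section Components.
Variable T : finType.
Implicit Types (F G : rel T) (C : {set T}).

Lemma connect_sub_in F G (A : {pred T}) :
  closed F A -> (forall u v, u \in A -> F u v -> G u v) ->
  forall x y, x \in A -> connect F x y -> connect G x y.
Proof.
move=> clA FG x _ xA /connectP [p Fp ->].
elim: p x xA Fp => //= z p IH x xA /andP [Fxz Fp].
apply: connect_trans (connect1 (FG _ _ xA Fxz)) (IH _ _ Fp).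
by rewrite -(clA _ _ Fxz).
Qed.

Lemma component_subset F (A : {pred T}) x :
  closed F A -> x \in A -> component F x \subset A.
Proof. by move=> clA xA; apply/subsetP => y; rewrite inE => /(closed_connect clA) <-. Qed.

Lemma components_memE F C x :
  symmetric F -> C \in components F -> x \in C -> C = component F x.
Proof.
move=> symF /imsetP [y _ ->]; rewrite inE => yx; apply/setP => z; rewrite !inE.
apply/idP/idP => [yz|]; last exact: connect_trans.
by apply: connect_trans yz; rewrite (sym_connect_sym symF).
Qed.

Lemma components_closed F C : symmetric F -> C \in components F -> closed F C.
Proof.
move=> symF /imsetP [y _ ->] u v Fuv; rewrite !inE.
apply/idP/idP => yu; apply: connect_trans yu (connect1 _) => //.
by rewrite symF.
Qed.

Lemma components_disjoint F C1 C2 :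
  symmetric F -> C1 \in components F -> C2 \in components F -> C1 != C2 ->
  [disjoint C1 & C2].
Proof.
move=> symF C1F C2F; apply: contraNT => /pred0Pn [x /andP [xC1 xC2]].
by rewrite (components_memE symF C1F xC1) (components_memE symF C2F xC2).
Qed.

Lemma eq_in_is_K2 F G C :
  {in C &, forall u v, F u v = G u v} -> is_K2 F C -> is_K2 G C.
Proof.
move=> FG [x [y [xy defC Fxy]]]; exists x, y; split=> //.
by rewrite -FG // defC !inE eqxx ?orbT.
Qed.

Lemma eq_in_is_odd_cycle F G C :
  {in C &, forall u v, F u v = G u v} -> is_odd_cycle F C -> is_odd_cycle G C.
Proof.
move=> FG [s [us s3 odd_s defC adj]]; exists s; split=> // x y xC yC.
by rewrite -FG // adj.
Qed.

Lemma odd_cycle_edge F C a : is_odd_cycle F C -> a \in C -> exists2 b, b \in C & F a b.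
Proof.
move=> [s [_ _ _ defC adj]] aC; have as_ : a \in s by rewrite defC inE in aC.
have bC : next s a \in C by rewrite defC inE mem_next.
by exists (next s a) => //; rewrite adj ?eqxx.
Qed.

Lemma odd_cycle_paired F C a :
  is_odd_cycle F C -> a \in C ->
  exists t, [/\ uniq (a :: t), C = [set x in a :: t] & paired F t].
Proof.
move=> [s [us _ odd_s defC adj]] aC; have as_ : a \in s by rewrite defC inE in aC.
have [i t rot_s] := rot_to as_.
exists t; rewrite -rot_s rot_uniq; split=> //.
  by apply/setP => x; rewrite defC !inE mem_rot.
apply: (@path_paired _ _ a); last by rewrite -(size_rot i) rot_s /= in odd_s.
have := cycle_next us; rewrite -(rot_cycle i) rot_s /= rcons_path => /andP [p _].
apply: (sub_in_path (P := mem s)) p; last by apply/allP => x; rewrite -rot_s mem_rot.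
by move=> x y xs _ /eqP <-; rewrite adj ?eqxx // defC inE ?mem_next.
Qed.

End Components.

Section Rematch.
Variable T : finType.

(** For a perfect 2-matching F, the vertices on the odd cycles of F. *)
Definition cycle_part (F : rel T) : {set T} := [set x | #|component F x| != 2].

Definition rematch (F : rel T) (s : seq T) : rel T := fun u v =>
  if (u \in s) || (v \in s) then (u \in s) && (v == partner s u) else F u v.

Variables (e e2 F : rel T) (s : seq T).
Hypotheses (PF : perfect_2matching e F) (closed_s : closed F s).
Hypotheses (uniq_s : uniq s) (paired_s : paired e2 s) (sym_e2 : symmetric e2).
Hypothesis F_e2 : forall u v, u \notin s -> F u v -> e2 u v.

Let symF : symmetric F. Proof. by case: PF => [[]]. Qed.
Let even_s : ~~ odd (size s). Proof. exact: paired_even paired_s. Qed.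

Lemma rematch_in u v : u \in s -> rematch F s u v = (v == partner s u).
Proof. by rewrite /rematch => ->. Qed.

Lemma rematch_out u v : u \notin s -> v \notin s -> rematch F s u v = F u v.
Proof. by rewrite /rematch => /negbTE -> /negbTE ->. Qed.

Lemma closed_rematch : closed (rematch F s) s.
Proof.
move=> u v; rewrite /rematch.
case: ifP => [_ /andP [us /eqP ->]|/norP [/negbTE -> /negbTE ->] //].
by rewrite us mem_partner.
Qed.

Lemma rematch_sym : symmetric (rematch F s).
Proof.
suff imp u v : rematch F s u v -> rematch F s v u by move=> u v; apply/idP/idP; apply: imp.
case: (boolP (u \in s)) => us.
  by rewrite rematch_in // => /eqP ->; rewrite rematch_in ?mem_partner // partnerK.
case: (boolP (v \in s)) => vs; first by move/closed_rematch; rewrite vs (negbTE us).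
by rewrite !rematch_out // symF.
Qed.

Lemma rematch_sub u v : rematch F s u v -> e2 u v.
Proof.
case: (boolP (u \in s)) => us.
  by rewrite rematch_in // => /eqP ->; apply: paired_partner.
case: (boolP (v \in s)) => vs; first by move/closed_rematch; rewrite vs (negbTE us).
by rewrite rematch_out //; apply: F_e2.
Qed.

Lemma component_rematch_in x : x \in s -> component (rematch F s) x = [set x; partner s x].
Proof.
move=> xs; apply/eqP; rewrite eqEsubset; apply/andP; split.
  apply: component_subset; last by rewrite set21.
  apply: intro_closed; first exact: sym_connect_sym rematch_sym.
  move=> u v Fuv; rewrite !inE => /orP [] /eqP uE.
    by rewrite uE rematch_in // in Fuv; rewrite Fuv orbT.
  by rewrite uE rematch_in ?mem_partner // partnerK // in Fuv; rewrite Fuv.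
apply/subsetP => y; rewrite !inE => /orP [] /eqP ->; first exact: connect0.
by apply: connect1; rewrite rematch_in.
Qed.

Lemma component_rematch_out x : x \notin s -> component (rematch F s) x = component F x.
Proof.
have clF : closed F [predC s] by apply: predC_closed.
have clG : closed (rematch F s) [predC s] by apply: predC_closed closed_rematch.
have agree u v : u \in [predC s] -> F u v = rematch F s u v.
  rewrite inE => us; case: (boolP (v \in s)) => vs; last by rewrite rematch_out.
  rewrite /rematch vs orbT (negbTE us); apply/negbTE.
  by apply: contraNN us => /closed_s ->.
move=> xs; apply/setP => y; rewrite !inE.
by apply/idP/idP; apply: (connect_sub_in (A := [predC s])) => // u v /agree ->.
Qed.

Lemma rematch_perfect : perfect_2matching e2 (rematch F s).
Proof.
split; first by split; [exact: rematch_sym | exact: rematch_sub].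
move=> _ /imsetP [x _ ->]; case: (boolP (x \in s)) => xs.
  left; rewrite component_rematch_in //; exists x, (partner s x); split=> //.
    by rewrite eq_sym partner_neq.
  by rewrite rematch_in.
have [_ compF] := PF.
have xC : component F x \in components F by apply: imset_f.
have agree : {in component F x &, forall u v, F u v = rematch F s u v}.
  have /subsetP sub := component_subset (predC_closed closed_s) xs.
  by move=> u v /sub uC /sub vC; rewrite rematch_out.
rewrite component_rematch_out //; case: (compF _ xC) => [K2|odd].
  by left; apply: eq_in_is_K2 K2.
by right; apply: eq_in_is_odd_cycle odd.
Qed.

Lemma card_cycle_part_rematch x :
  x \in s -> x \in cycle_part F -> #|cycle_part (rematch F s)| < #|cycle_part F|.
Proof.
move=> xs xF; apply: proper_card; apply/properP; split; last first.
  exists x => //.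
  by rewrite inE negbK component_rematch_in // cards2 (eq_sym x) partner_neq.
apply/subsetP => y; rewrite !inE; case: (boolP (y \in s)) => ys.
  by rewrite component_rematch_in // cards2 (eq_sym y) partner_neq.
by rewrite component_rematch_out.
Qed.

End Rematch.

Section Switch.
Variable T : finType.
Implicit Types (e : rel T) (a b c d x y u : T).

Lemma eq_set2l a b u : a != b -> ([set a; u] == [set a; b]) = (u == b).
Proof.
move=> ab; apply/eqP/eqP => [E|-> //].
have : b \in [set a; u] by rewrite E set22.
by rewrite !inE => /orP [/eqP ba|/eqP ->]; first by rewrite ba eqxx in ab.
Qed.

Lemma set2_eqF a u (B : {set T}) : a \notin B -> ([set a; u] == B) = false.
Proof. by move=> aB; apply: contraNF aB => /eqP <-; apply: set21. Qed.

Lemma set1_eq_set2F x a b : a != b -> ([set x; x] == [set a; b]) = false.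
Proof.
move=> ab; apply: contraNF ab => /eqP E.
have := set21 a b; have := set22 a b.
by rewrite -E setUid !inE => /eqP -> /eqP ->.
Qed.

Definition switch e a b c d : rel T := fun x y =>
  (e x y && ([set x; y] != [set a; b]) && ([set x; y] != [set c; d]))
  || ([set x; y] == [set a; c]) || ([set x; y] == [set b; d]).

Lemma switch_flip e a b c d : switch e a b c d =2 switch e b a d c.
Proof.
by move=> x y; rewrite /switch (setUC [set b] [set a]) (setUC [set d] [set c]) orbAC.
Qed.

Lemma switch_swap e a b c d : switch e a b c d =2 switch e c d a b.
Proof.
by move=> x y; rewrite /switch (setUC [set c] [set a]) (setUC [set d] [set b]) andbAC.
Qed.

Lemma switch_simple e a b c d :
  simple_graph e -> a != c -> b != d -> simple_graph (switch e a b c d).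
Proof.
move=> [sym_e irr_e] ac bd; split => [x y|x]; first by rewrite /switch setUC sym_e.
by rewrite /switch irr_e (set1_eq_set2F _ ac) (set1_eq_set2F _ bd).
Qed.

Lemma switch_add e a b c d : switch e a b c d a c.
Proof. by rewrite /switch eqxx orbT. Qed.

Lemma switch_keep e a b c d : {in [predC [:: a; c]] &, subrel e (switch e a b c d)}.
Proof.
move=> x y; rewrite !inE !negb_or => /andP [xa xc] /andP [ya yc] exy.
have a_xy : a \notin [set x; y] by rewrite !inE negb_or !(eq_sym a) xa ya.
have c_xy : c \notin [set x; y] by rewrite !inE negb_or !(eq_sym c) xc yc.
rewrite /switch exy /=; apply/orP; left; apply/orP; left; apply/andP.
by split; [apply: contraNneq a_xy | apply: contraNneq c_xy] => ->; apply: set21.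
Qed.

Lemma eq_deg e e' : e =2 e' -> deg e =1 deg e'.
Proof. by move=> ee' v; apply: eq_card => u; rewrite !inE ee'. Qed.

Lemma deg_switch_head e a b c d :
  e a b -> ~~ e a c -> a != b -> a \notin [set c; d] -> deg (switch e a b c d) a = deg e a.
Proof.
move=> eab nac ab a_cd; have := a_cd; rewrite !inE negb_or => /andP [ac ad].
have a_bd : a \notin [set b; d] by rewrite !inE negb_or ab ad.
rewrite /deg.
have -> : [set u | switch e a b c d a u] = c |: ([set u | e a u] :\ b).
  apply/setP => u; rewrite !inE /switch (eq_set2l _ ab) (eq_set2l _ ac) !set2_eqF //.
  by rewrite andbT orbF orbC andbC.
by rewrite cardsU1 (cardsD1 b [set u | e a u]) !inE eab (negbTE nac) andbF.
Qed.

Lemma deg_switch e a b c d :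
  simple_graph e -> e a b -> e c d -> ~~ e a c -> ~~ e b d ->
  [disjoint [set a; b] & [set c; d]] ->
  forall v, deg (switch e a b c d) v = deg e v.
Proof.
move=> [sym_e irr_e] eab ecd nac nbd dis v.
have ne x y : e x y -> x != y by apply: contraTneq => ->; rewrite irr_e.
have a_cd : a \notin [set c; d] by rewrite (disjointFr dis) ?set21.
have b_cd : b \notin [set c; d] by rewrite (disjointFr dis) ?set22.
have c_ab : c \notin [set a; b] by rewrite (disjointFl dis) ?set21.
have d_ab : d \notin [set a; b] by rewrite (disjointFl dis) ?set22.
case: (eqVneq v a) => [->|va]; first by apply: deg_switch_head; rewrite ?ne.
case: (eqVneq v b) => [->|vb].
  rewrite (eq_deg (switch_flip _ _ _ _ _)).
  by apply: deg_switch_head; rewrite 1?setUC ?ne // sym_e.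
case: (eqVneq v c) => [->|vc].
  rewrite (eq_deg (switch_swap _ _ _ _ _)).
  by apply: deg_switch_head; rewrite ?ne // sym_e.
case: (eqVneq v d) => [->|vd].
  rewrite (eq_deg (switch_swap _ _ _ _ _)) (eq_deg (switch_flip _ _ _ _ _)).
  by apply: deg_switch_head; rewrite 1?setUC ?ne // sym_e.
apply: eq_card => u; rewrite !inE /switch !set2_eqF /= ?andbT ?orbF //.
all: by rewrite !inE negb_or ?va ?vb ?vc ?vd.
Qed.

End Switch.

Section Reduction.
Variable T : finType.

Lemma merge_odd_cycles (e e2 F : rel T) (C1 C2 : {set T}) a c :
  perfect_2matching e F -> C1 \in components F -> C2 \in components F -> C1 != C2 ->
  is_odd_cycle F C1 -> is_odd_cycle F C2 -> a \in C1 -> c \in C2 ->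
  symmetric e2 -> e2 a c -> {in [predC [:: a; c]] &, subrel F e2} ->
  exists F2, perfect_2matching e2 F2 /\ #|cycle_part F2| < #|cycle_part F|.
Proof.
move=> PF C1F C2F C12 odd1 odd2 aC1 cC2 sym_e2 e2ac Fe2.
have [[symF _] _] := PF.
have disj u : u \in C1 -> u \in C2 = false.
  by move=> uC1; apply: disjointFr (components_disjoint symF C1F C2F C12) uC1.
have [t1 [uniq1 C1E paired1]] := odd_cycle_paired odd1 aC1.
have [t2 [uniq2 C2E paired2]] := odd_cycle_paired odd2 cC2.
have memC1 u : (u \in C1) = (u \in a :: t1) by rewrite C1E inE.
have memC2 u : (u \in C2) = (u \in c :: t2) by rewrite C2E inE.
pose s := a :: c :: t1 ++ t2.
have mem_s u : (u \in s) = (u \in C1) || (u \in C2).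
  by rewrite memC1 memC2 !inE mem_cat orbACA !orbA.
have uniq_s : uniq s.
  have perm_s : perm_eq s ((a :: t1) ++ c :: t2).
    by rewrite perm_cons -cat1s perm_catCA; apply: perm_refl.
  rewrite (perm_uniq perm_s) cat_uniq uniq1 uniq2 andbT.
  by apply/hasPn => u; rewrite -memC1 -memC2 => uC2; apply/negP => /disj; rewrite uC2.
have avoid_s u : u \notin s -> u \in [predC [:: a; c]].
  by rewrite !inE !negb_or => /and3P [-> -> _].
have avoid_t u : u \in t1 ++ t2 -> u \in [predC [:: a; c]].
  case/and3P: uniq_s => a_nin c_nin _ ut.
  rewrite !inE negb_or; apply/andP; split.
    by apply: contraNneq a_nin => <-; rewrite inE ut orbT.
  by apply: contraNneq c_nin => <-.
have paired_s : paired e2 s.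
  rewrite /= e2ac.
  exact: sub_in_paired (sub_in2 avoid_t Fe2) (paired_cat paired1 paired2).
have closed_s : closed F s.
  move=> u v Fuv.
  by rewrite !mem_s (components_closed symF C1F Fuv) (components_closed symF C2F Fuv).
have F_e2 u v : u \notin s -> F u v -> e2 u v.
  move=> us Fuv; have vs : v \notin s by rewrite -(closed_s _ _ Fuv).
  exact: Fe2 (avoid_s _ us) (avoid_s _ vs) Fuv.
exists (rematch F s); split; first exact: (rematch_perfect PF closed_s).
apply: (card_cycle_part_rematch (x := a) PF closed_s uniq_s paired_s) => //.
  by rewrite inE eqxx.
rewrite inE -(components_memE symF C1F aC1) C1E cardsE (card_uniqP uniq1) /=.
by apply: contraTneq (paired_even paired1) => -[->].
Qed.

Lemma reduce_odd_cycles (e F : rel T) (C1 C2 : {set T}) :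
  simple_graph e -> perfect_2matching e F ->
  C1 \in components F -> C2 \in components F -> C1 != C2 ->
  is_odd_cycle F C1 -> is_odd_cycle F C2 ->
  exists e2 : rel T, [/\ simple_graph e2, forall v, deg e2 v = deg e v &
    exists F2, perfect_2matching e2 F2 /\ #|cycle_part F2| < #|cycle_part F|].
Proof.
move=> simple_e PF C1F C2F C12 odd1 odd2.
have [[sym_e _] [[symF Fe] _]] := (simple_e, PF).
have [a aC1] : exists a, a \in C1 by case/imsetP: C1F => a _ ->; exists a; rewrite inE.
have [c cC2] : exists c, c \in C2 by case/imsetP: C2F => c _ ->; exists c; rewrite inE.
have [b bC1 Fab] := odd_cycle_edge odd1 aC1.
have [d dC2 Fcd] := odd_cycle_edge odd2 cC2.
have merge := merge_odd_cycles PF C1F C2F C12 odd1 odd2.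
have Fe_in (x y : T) : {in [predC [:: x; y]] &, subrel F e} by move=> u v _ _ /Fe.
case: (boolP (e a c)) => [eac|nac].
  by exists e; split=> //; apply: merge aC1 cC2 sym_e eac (Fe_in _ _).
case: (boolP (e b d)) => [ebd|nbd].
  by exists e; split=> //; apply: merge bC1 dC2 sym_e ebd (Fe_in _ _).
have disj := components_disjoint symF C1F C2F C12.
have ne x y : x \in C1 -> y \in C2 -> x != y.
  by move=> xC1 yC2; apply: contraTneq yC2 => <-; rewrite (disjointFr disj xC1).
have sub2 x y (C : {set T}) : x \in C -> y \in C -> [set x; y] \subset C.
  by move=> xC yC; apply/subsetP => z; rewrite !inE => /orP [] /eqP ->.
have simple_e2 := switch_simple simple_e (ne _ _ aC1 cC2) (ne _ _ bC1 dC2).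
exists (switch e a b c d); split=> //.
  apply: deg_switch (Fe _ _ Fab) (Fe _ _ Fcd) nac nbd _ => //.
  exact: disjointW (sub2 _ _ _ aC1 bC1) (sub2 _ _ _ cC2 dC2) disj.
apply: merge aC1 cC2 simple_e2.1 (switch_add _ _ _ _ _) _.
by move=> u v uac vac /Fe; apply: switch_keep.
Qed.

Lemma not_at_most_one_odd_cycle (F : rel T) :
  ~ at_most_one_odd_cycle F ->
  exists C1 C2, [/\ C1 \in components F, C2 \in components F, C1 != C2,
                    is_odd_cycle F C1 & is_odd_cycle F C2].
Proof.
move=> many; apply: NNPP => none; apply: many => C1 C2 C1F C2F odd1 odd2.
by apply: NNPP => /eqP C12; apply: none; exists C1, C2.
Qed.

End Reduction.

Theorem lemma18 (T : finType) (e : rel T) :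
  simple_graph e ->
  (exists F : rel T, perfect_2matching e F) ->
  exists e' : rel T,
    [/\ simple_graph e',
        (forall v : T, deg e' v = deg e v) &
        exists F : rel T, perfect_2matching e' F /\ at_most_one_odd_cycle F].
Proof.
move=> simple_e [F PF]; have [n] := ubnP #|cycle_part F|.
elim: n e F simple_e PF => // n IH e F simple_e PF lt_n.
case: (classic (at_most_one_odd_cycle F)) => [one|/not_at_most_one_odd_cycle].
  by exists e; split=> //; exists F.
move=> [C1 [C2 [C1F C2F C12 odd1 odd2]]].
have [e2 [simple_e2 deg_e2 [F2 [PF2 lt_F2]]]] :=
  reduce_odd_cycles simple_e PF C1F C2F C12 odd1 odd2.
have [e' [simple_e' deg_e' one]] := IH e2 F2 simple_e2 PF2 (leq_trans lt_F2 lt_n).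
by exists e'; split=> // v; rewrite deg_e' deg_e2.
Qed.
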